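(* Let $m,n\in\mathbb{N}$ and $\epsilon>0$. Let $\alpha\in\mathbb{Z}_n$ and $f=\chi_\alpha:\mathbb{Z}_n\to\mathbb{C}$. Let $\ell:=\min(n,m)$ and let $g:\mathbb{Z}_m\to\mathbb{C}$ be defined by $g(x)=f(x)$ for $0\le x<\ell$ and $g(x)=0$ otherwise. Let $r=1/(2\epsilon)$ and $\Gamma'=\{\beta\in\mathbb{Z}_m: |\frac mn\alpha-\beta|_m\le r+1\}$. Then $\|g-g|_{\Gamma'}\|_2^2\le\epsilon$.
   Context: $\mathbb{Z}_n=\{0,\dots,n-1\}$ with addition mod $n$; elements are treated as these integer representatives. $\chi_{\alpha}(x)=\exp(2\pi i\alpha x/n)$ on $\mathbb{Z}_n$, and $\chi_{\beta,m}(x)=\exp(2\pi i\beta x/m)$ on $\mathbb{Z}_m$. On $\mathbb{Z}_m$: $\langle h_1,h_2\rangle=\frac1m\sum_x h_1(x)\overline{h_2(x)}$, $\|h\|_2^2=\langle h,h\rangle$, $\widehat h(\beta)=\langle h,\chi_{\beta,m}\rangle$, and for $\Gamma'\subseteq\mathbb{Z}_m$, $h|_{\Gamma'}=\sum_{\beta\in\Gamma'}\widehat h(\beta)\chi_{\beta,m}$. For $k\in\mathbb{N}$, $x\in\mathbb{R}$: $|x|_k=\min\{|x-kz|:z\in\mathbb{Z}\}$. *)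

From mathcomp Require Import all_boot all_order all_algebra.
From mathcomp Require Import complex.
From mathcomp Require Import boolp classical_sets reals trigo.
Set Implicit Arguments. Unset Strict Implicit. Unset Printing Implicit Defensive.
Import Order.TTheory GRing.Theory Num.Theory.
Local Open Scope ring_scope.
Local Open Scope complex_scope.

Section Defs.
Variable R : realType.

Definition expi (t : R) : R[i] := (cos t) +i* (sin t).

Definition chi (k : nat) (beta x : nat) : R[i] :=
  expi (2 * pi * beta%:R * x%:R / k%:R).

Definition dotZ (m : nat) (h1 h2 : 'I_m -> R[i]) : R[i] :=
  (m%:R)^-1 * \sum_(x < m) h1 x * (h2 x)^*.

Definition norm2sq (m : nat) (h : 'I_m -> R[i]) : R[i] := dotZ h h.

Definition fourier (m : nat) (h : 'I_m -> R[i]) (beta : 'I_m) : R[i] :=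
  dotZ h (fun x => chi m beta x).

Definition restrG (m : nat) (h : 'I_m -> R[i]) (G : pred 'I_m) : 'I_m -> R[i] :=
  fun x => \sum_(beta < m | G beta) fourier h beta * chi m beta x.

Definition distk (k : nat) (x : R) : R :=
  inf [set `|x - k%:R * z%:~R| | z in [set: int]]%classic.

End Defs.

From mathcomp Require Import all_boot all_order all_algebra.
From mathcomp Require Import complex.
From mathcomp Require Import boolp classical_sets reals trigo.
From mathcomp Require Import topology normedtype derive.
From mathcomp Require Import ring lra zify.
Import Order.TTheory GRing.Theory Num.Theory numFieldNormedType.Exports.
Local Open Scope ring_scope.
Local Open Scope complex_scope.

(* By Parseval, the left-hand side is the sum of |g^(beta)|^2 over the beta
   outside Gamma'.  Writing m alpha/n - beta = v + m z with 0 <= v <= m,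
   g^(beta) is 1/m times a geometric sum of e(v/m), so
   |g^(beta)| <= 1/(m |sin(pi v/m)|) <= 1/(2 min(v, m - v)) by Jordan's
   inequality, and min(v, m - v) >= |m alpha/n - beta|_m > r + 1.  As beta runs
   over Z_m, v runs over theta + k (k < m), theta the fractional part of
   m alpha/n, and the telescoping bound y^-2 <= 1/(y - 1/2) - 1/(y + 1/2) sums
   the tail to at most 1/(2 r + 1) = eps/(1 + eps). *)

Set Implicit Arguments. Unset Strict Implicit. Unset Printing Implicit Defensive.

Section Characters.
Variable R : realType.
Local Notation C := R[i].

Lemma expiD (a b : R) : expi (a + b) = expi a * expi b :> C.
Proof. by rewrite /expi sinD cosD; simpc; congr (_ +i* _); ring. Qed.

Lemma expi0 : expi 0 = 1 :> C.
Proof. by rewrite /expi sin0 cos0. Qed.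

Lemma expiN (a : R) : expi (- a) = (expi a)^*%R :> C.
Proof. by rewrite /expi sinN cosN. Qed.

Lemma expiMn (a : R) k : expi (a *+ k) = expi a ^+ k :> C.
Proof. by elim: k => [|k IH]; rewrite ?expi0 // mulrS expiD IH exprS. Qed.

Lemma expi_2pi_nat k : expi (2 * pi * k%:R) = 1 :> C.
Proof.
have -> : 2 * pi * k%:R = (pi *+ 2) *+ k :> R by rewrite -mulr_natr -(mulr_natr pi); ring.
by rewrite expiMn /expi cos2pi sin2pi expr1n.
Qed.

Lemma norm_expi (a : R) : `|expi a| = 1 :> C.
Proof.
apply/eqP; rewrite -(@pexpr_eq1 _ _ 2) // normCK -expiN -expiD subrr.
by rewrite expi0.
Qed.

Lemma sqr_norm_expi_sub1 (b : R) : `|expi b - 1| ^+ 2 = (4 * sin (b / 2) ^+ 2)%:C :> C.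
Proof.
have hb : b = (b / 2) *+ 2 by rewrite -mulr_natr mulfVK // pnatr_eq0.
rewrite normCK [in LHS]hb /expi cos_mulr2n sin_mulr2n; simpc.
congr (_ +i* _); last by ring.
by rewrite cos2sin2 -[RHS]mulr1 -[X in _ = _ * X](cos2Dsin2 (b / 2)); ring.
Qed.

Lemma expi_neq1 (t : R) : 0 < `|t| < pi *+ 2 -> expi t != 1 :> C.
Proof.
move=> /andP[t0 t2pi]; rewrite -subr_eq0 -normr_eq0 -sqrf_eq0 sqr_norm_expi_sub1.
rewrite fmorph_eq0 mulf_eq0 pnatr_eq0 sqrf_eq0 /=.
wlog tpos : t t0 t2pi / 0 < t.
  move=> sym; have [t_lt0|t_ge0] := ltP t 0.
    by rewrite -oppr_eq0 -sinN -mulNr sym ?normrN ?oppr_gt0.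
  by apply: sym; rewrite // lt_neqAle t_ge0 andbT eq_sym -normr_eq0 gt_eqF.
apply/lt0r_neq0/sin_gt0_pi; rewrite divr_gt0 //= ltr_pdivrMr //.
by rewrite mulr_natr -(gtr0_norm tpos).
Qed.

Lemma chi_sym m a b : chi R m a b = chi R m b a.
Proof. by rewrite /chi [2 * pi * _ * _]mulrAC. Qed.

Lemma chi_mulJ (m k a b : nat) :
  chi R m k a * (chi R m k b)^*%R = expi (2 * pi * (a%:R - b%:R) / m%:R) ^+ k.
Proof.
rewrite /chi -expiN -expiD -expiMn; congr expi; rewrite -mulr_natr; ring.
Qed.

Lemma sum_expr_root1 (u : C) m : u ^+ m = 1 -> u != 1 -> \sum_(k < m) u ^+ k = 0.
Proof.
move=> um u1; have := subrX1 u m; rewrite um subrr => /esym/eqP.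
by rewrite mulf_eq0 subr_eq0 (negbTE u1) => /eqP.
Qed.

Lemma chi_orthogonal m (a b : 'I_m) :
  \sum_(k < m) chi R m k a * (chi R m k b)^*%R = (a == b)%:R * m%:R.
Proof.
under eq_bigr do rewrite chi_mulJ.
have mR : (m%:R : R) != 0 by rewrite pnatr_eq0 -lt0n (leq_ltn_trans _ (ltn_ord a)).
have [<-|nab] := eqVneq a b.
  rewrite subrr mulr0 mul0r expi0 mul1r.
  by under eq_bigr do rewrite expr1n; rewrite sumr_const card_ord.
rewrite mul0r; apply: sum_expr_root1.
  rewrite -expiMn -[_ *+ m]mulr_natr mulfVK // mulrBr expiD expiN !expi_2pi_nat.
  by rewrite rmorph1 mulr1.
have d0 : 0 < `|a%:R - b%:R| :> R by rewrite normr_gt0 subr_eq0 eqr_nat.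
have dm : `|a%:R - b%:R| < m%:R :> R.
  have := ltn_ord a; have := ltn_ord b; rewrite -!(ltr_nat R) => hb ha.
  have := ler0n R a; have := ler0n R b => b0 a0.
  rewrite ltr_norml; apply/andP; split; lra.
have -> : 2 * pi * (a%:R - b%:R) / m%:R = pi *+ 2 * ((a%:R - b%:R) / m%:R) :> R.
  by rewrite -[pi *+ 2]mulr_natr; ring.
have pi2 : 0 < pi *+ 2 :> R by rewrite pmulrn_lgt0 ?pi_gt0.
have m0 : (0 < m%:R :> R) by apply: le_lt_trans dm.
apply: expi_neq1; rewrite normrM normrM normfV gtr0_norm // (gtr0_norm m0).
by rewrite pmulr_rgt0 // gtr_pMr // divr_gt0 //= ltr_pdivrMr // mul1r.
Qed.

Section FourierZm.
Variables (m : nat) (m_gt0 : (0 < m)%N).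

Let mC_neq0 : (m%:R : C) != 0. Proof. by rewrite pnatr_eq0 -lt0n. Qed.

Lemma fourier_inversion (h : 'I_m -> C) (x : 'I_m) :
  \sum_(b < m) fourier h b * chi R m b x = h x.
Proof.
rewrite /fourier /dotZ.
under eq_bigr do rewrite -mulrA big_distrl /=.
rewrite -big_distrr /= exchange_big /=.
under eq_bigr => y _.
  rewrite (eq_bigr (fun b : 'I_m => h y * (chi R m b x * (chi R m b y)^*%R))); last first.
    by move=> b _; rewrite -mulrA [_^*%R * _]mulrC.
  rewrite -big_distrr /= chi_orthogonal; over.
rewrite (bigD1 x) //= eqxx mul1r big1 ?addr0; last first.
  by move=> y yx; rewrite eq_sym (negbTE yx) mul0r mulr0.
by rewrite mulrCA mulVf // mulr1.
Qed.

Lemma parseval (c : 'I_m -> C) :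
  norm2sq (fun x : 'I_m => \sum_(b < m) c b * chi R m b x) = \sum_(b < m) `|c b| ^+ 2.
Proof.
rewrite /norm2sq /dotZ.
have expand x : (\sum_(b < m) c b * chi R m b x) * (\sum_(b < m) c b * chi R m b x)^*%R
    = \sum_(b < m) \sum_(a < m) c b * (c a)^*%R * (chi R m x b * (chi R m x a)^*%R).
  rewrite rmorph_sum big_distrl /=; apply: eq_bigr => b _.
  rewrite big_distrr /=; apply: eq_bigr => a _.
  by rewrite rmorphM /= [chi R m b x]chi_sym [chi R m a x]chi_sym; ring.
under eq_bigr do rewrite expand.
rewrite exchange_big /=; under eq_bigr do rewrite exchange_big /=.
under eq_bigr do under eq_bigr do rewrite -big_distrr /= chi_orthogonal.
rewrite big_distrr; apply: eq_bigr => b _ /=.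
rewrite (bigD1 b) //= eqxx mul1r big1 ?addr0; last first.
  by move=> a ab; rewrite eq_sym (negbTE ab) mul0r mulr0.
by rewrite normCK mulrCA mulVf // mulr1.
Qed.

Lemma sub_restrG (h : 'I_m -> C) (G : pred 'I_m) (x : 'I_m) :
  h x - restrG h G x = \sum_(b < m) (if G b then 0 else fourier h b) * chi R m b x.
Proof.
rewrite -{1}(fourier_inversion h x) /restrG [X in _ - X]big_mkcond /= -sumrB.
by apply: eq_bigr => b _; case: (G b); rewrite ?subrr ?mul0r ?subr0.
Qed.

Lemma norm2sq_sub_restrG (h : 'I_m -> C) (G : pred 'I_m) :
  norm2sq (fun x => h x - restrG h G x) = \sum_(b < m | ~~ G b) `|fourier h b| ^+ 2.
Proof.
rewrite (funext (sub_restrG h G)) parseval [RHS]big_mkcond /=.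
by apply: eq_bigr => b _; case: (G b); rewrite ?normr0 ?expr0n.
Qed.

End FourierZm.
End Characters.

Section Jordan.
Variable R : realType.
Local Open Scope classical_set_scope.

Lemma jordan_sin_ge (x : R) : 0 <= x <= pi / 2 -> 2 / pi * x <= sin x.
Proof.
move=> /andP[x_ge0 x_le].
have pi_gt0 := pi_gt0 R.
set k : R := 2 / pi.
have k01 : 0 <= k <= 1.
  by rewrite /k divr_ge0 ?ler_pdivrMr ?mul1r ?(ltW pi_gt0) ?pi_ge2.
pose h x : R := sin x - k * x.
have h_derive (t : R) : is_derive t 1 h (cos t - k).
  by apply: is_derive_eq; rewrite [k%:A]mulr1.
have h_cont (a b : R) : {within `[a, b], continuous h}.
  by apply: derivable_within_continuous => t _; exact: ex_derive.
have h_pihalf : h (pi / 2) = 0.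
  by rewrite /h sin_pihalf /k mulf_div [pi * 2]mulrC divff ?subrr // mulf_neq0 ?gt_eqF.
set x0 := acos k.
have cos_x0 : cos x0 = k by rewrite /x0 acosK // in_itv /=; lra.
have x0_ge0 : 0 <= x0 by apply: acos_ge0; lra.
have x0_le : x0 <= pi by apply: acos_lepi; lra.
(* h vanishes at 0 and pi/2, increases on [0, x0] and decreases on [x0, pi/2]. *)
have cos_anti (s t : R) : 0 <= s -> s <= t -> t <= pi -> cos t <= cos s.
  move=> s0 st tpi; have t0 := le_trans s0 st; have spi := le_trans st tpi.
  by rewrite leNgt ltr_cos ?in_itv /= ?s0 ?t0 ?spi ?tpi // -leNgt.
suff : 0 <= h x by rewrite /h subr_ge0.
have [x_le_x0|x0_lt_x] := leP x x0.
- have [c /[!in_itv]/= /andP[c0 cx] e] :=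
    MVT_segment x_ge0 (fun t _ => h_derive t) (h_cont 0 x).
  have : 0 <= h x - h 0.
    by rewrite e mulr_ge0 ?subr_ge0 // -cos_x0 cos_anti // (le_trans cx x_le_x0).
  by rewrite /h sin0 mulr0 subr0 subr_ge0.
- have [c /[!in_itv]/= /andP[xc cp] e] :=
    MVT_segment x_le (fun t _ => h_derive t) (h_cont x (pi / 2)).
  have : h (pi / 2) - h x <= 0.
    rewrite e mulr_le0_ge0 ?subr_ge0 // subr_le0 -cos_x0 cos_anti //.
      exact: ltW (lt_le_trans x0_lt_x xc).
    by apply: (le_trans cp); lra.
  by rewrite h_pihalf sub0r oppr_le0.
Qed.

Lemma sin_pi_ge (t M : R) : 0 <= t <= 1 -> M <= t -> M <= 1 - t -> 2 * M <= sin (pi * t).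
Proof.
move=> /andP[t0 t1] Mt M1t.
have pi_gt0 := pi_gt0 R.
have jordan (s : R) : 0 <= s <= 1 / 2 -> 2 * s <= sin (pi * s).
  move=> /andP[s0 s_half].
  have -> : 2 * s = 2 / pi * (pi * s) by rewrite mulrA divfK ?gt_eqF.
  apply: jordan_sin_ge; rewrite mulr_ge0 ?(ltW pi_gt0) //=.
  by rewrite -[2^-1]mul1r ler_pM2l.
have [t_half|t_half] := lerP t (1 / 2).
  by apply: le_trans (jordan _ _); rewrite ?ler_pM2l ?t0.
have -> : pi * t = pi - pi * (1 - t) by ring.
rewrite sinB sinpi cospi mul0r sub0r mulN1r opprK.
by apply: le_trans (jordan _ _); rewrite ?ler_pM2l //; apply/andP; split; lra.
Qed.

End Jordan.

Section InvSqTail.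
Variable R : realType.

Definition invsq_gt (a y : R) : R := if a < y then (y ^+ 2)^-1 else 0.

Lemma invsq_gt_ge0 a y : 0 <= invsq_gt a y.
Proof. by rewrite /invsq_gt; case: ifP; rewrite ?invr_ge0 ?sqr_ge0. Qed.

Lemma invsq_telescope (y : R) : 1 / 2 < y -> (y ^+ 2)^-1 + (y + 1 / 2)^-1 <= (y - 1 / 2)^-1.
Proof.
move=> y_gt; rewrite -subr_ge0.
have -> : (y - 1 / 2)^-1 - ((y ^+ 2)^-1 + (y + 1 / 2)^-1) =
    (4 * y ^+ 2 * (y - 1 / 2) * (y + 1 / 2))^-1.
  by field; rewrite !gt_eqF //; lra.
by rewrite invr_ge0 !mulr_ge0 ?sqr_ge0 //; lra.
Qed.

Lemma sum_invsq_gt_le (a y : R) N : 1 / 2 < a ->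
  \sum_(k < N) invsq_gt a (y + k%:R) <= (Num.max y a - 1 / 2)^-1.
Proof.
move=> a_gt; elim: N y => [|N IH] y.
  by rewrite big_ord0 invr_ge0 subr_ge0 le_max; lra.
rewrite big_ord_recl /= addr0.
under eq_bigr => i _ do rewrite /bump /= add1n mulrS addrA.
apply: le_trans (lerD (lexx _) (IH (y + 1))) _.
rewrite /invsq_gt; case: ifP => ay.
- rewrite !max_l; try lra.
  rewrite (_ : y + 1 - 1 / 2 = y + 1 / 2); last lra.
  by apply: invsq_telescope; lra.
- rewrite add0r (max_r (x := y)); last by rewrite leNgt ay.
  rewrite lef_pV2 ?posrE ?lerD2r ?le_max ?lexx ?orbT //; try lra.
  by rewrite subr_gt0 (lt_le_trans a_gt) // le_max lexx orbT.
Qed.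

Lemma sum_invsq_gt_sym_le (a t : R) m : 1 <= a -> 0 <= t <= 1 ->
  \sum_(k < m) (invsq_gt a (t + k%:R) + invsq_gt a (m%:R - (t + k%:R)))
    <= 2 / (a - 1 / 2).
Proof.
move=> a_ge1 /andP[t0 t1].
have refl : \sum_(k < m) invsq_gt a (m%:R - (t + k%:R))
    = \sum_(k < m) invsq_gt a ((1 - t) + k%:R).
  rewrite (reindex_inj rev_ord_inj) /=; apply: eq_bigr => k _.
  by congr invsq_gt; rewrite natrB // -natr1; ring.
rewrite big_split /= refl.
apply: le_trans (lerD (sum_invsq_gt_le _ _ _) (sum_invsq_gt_le _ _ _)) _; try lra.
by rewrite !max_r; lra.
Qed.

End InvSqTail.

Lemma distk_le (R : realType) (m : nat) (t : R) (z : int) :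
  distk m t <= `|t - m%:R * z%:~R|.
Proof.
apply: ge_inf; last by exists z.
by exists 0 => _ [y _ <-].
Qed.

Lemma ord_shift_perm m z0 : (0 < m)%N ->
  exists k : 'I_m -> 'I_m, injective k /\ forall b : 'I_m, (k b + b = z0 %[mod m])%N.
Proof.
case: m => // m _; exists (fun b => inZp z0 - b); split.
  by move=> x y /addrI /oppr_inj.
by move=> b; have /(congr1 val) /= -> := subrK b (inZp z0 : 'I_m.+1).
Qed.

Section TruncatedCharacter.
Variable R : realType.
Local Notation C := R[i].

Lemma sin_sqr_DpiZ (x : R) (z : int) : sin (x + pi * z%:~R) ^+ 2 = sin x ^+ 2.
Proof.
have sin_sqr_Dpin (y : R) (k : nat) : sin (y + pi * k%:R) ^+ 2 = sin y ^+ 2.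
  elim: k => [|k IH]; first by rewrite mulr0 addr0.
  by rewrite -natr1 mulrDr mulr1 addrA sinDpi sqrrN IH.
case: z => k; first exact: sin_sqr_Dpin.
by rewrite NegzE mulrNz mulrN -[in RHS](subrK (pi * k.+1%:R) x) sin_sqr_Dpin.
Qed.

Lemma norm_geom_expi_le (a : R) l :
  `|\sum_(x < l) expi a ^+ x| ^+ 2 * `|expi a - 1| ^+ 2 <= 4 :> C.
Proof.
have norm_le2 : `|expi a ^+ l - 1| <= 2 :> C.
  by apply: le_trans (ler_normB _ _) _; rewrite normrX norm_expi expr1n normr1.
rewrite -exprMn -normrM mulrC -subrX1 (_ : 4 = 2 ^+ 2); last by rewrite expr2 -natrM.
by rewrite lerXn2r ?nnegrE.
Qed.

Lemma fourier_trunc_chi (m n l alpha : nat) (beta : 'I_m) : (l <= m)%N ->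
  fourier (fun x : 'I_m => if (x < l)%N then chi R n alpha x else 0) beta
  = (m%:R)^-1 * \sum_(x < l) expi (2 * pi * (alpha%:R / n%:R - beta%:R / m%:R)) ^+ x.
Proof.
move=> lm; rewrite /fourier /dotZ; congr (_ * _).
rewrite (big_ord_widen m (fun x => expi _ ^+ x) lm) [RHS]big_mkcond /=.
apply: eq_bigr => x _; case: ifP => _; last by rewrite mul0r.
rewrite /chi -expiN -expiD -expiMn; congr expi.
rewrite -[_ *+ (x : nat)]mulr_natr; ring.
Qed.

Lemma fourier_trunc_chi_sin_le (m n l alpha : nat) (beta : 'I_m) (v : R) (z : int) :
  (0 < m)%N -> (l <= m)%N ->
  m%:R / n%:R * alpha%:R - beta%:R = v + m%:R * z%:~R ->
  `|fourier (fun x : 'I_m => if (x < l)%N then chi R n alpha x else 0) beta| ^+ 2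
    * ((m%:R * sin (pi * (v / m%:R))) ^+ 2)%:C <= 1.
Proof.
move=> m_gt0 lm e.
have mR0 : (m%:R : R) != 0 by rewrite pnatr_eq0 -lt0n.
rewrite fourier_trunc_chi //; set a := 2 * pi * _.
have a_half : a / 2 = pi * (v / m%:R) + pi * z%:~R.
  rewrite /a -[v](addrK (m%:R * z%:~R)) -e.
  by set ni := (n%:R)^-1; field.
have := norm_geom_expi_le a l.
rewrite sqr_norm_expi_sub1 a_half sin_sqr_DpiZ normrM exprMn normfV normr_nat.
set S := `|_| ^+ 2; rewrite rmorphM /= rmorph_nat mulrCA -[X in _ <= X]mulr1 ler_pM2l //.
have mC0 : (m%:R : C) != 0 by rewrite pnatr_eq0 -lt0n.
suff -> : m%:R^-1 ^+ 2 * S * ((m%:R * sin (pi * (v / m%:R))) ^+ 2)%:C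
    = S * (sin (pi * (v / m%:R)) ^+ 2)%:C by [].
by rewrite exprMn !rmorphM /= rmorph_nat; field.
Qed.

Lemma fourier_trunc_chi_le (m n l alpha : nat) (beta : 'I_m) (v M : R) (z : int) :
  (0 < m)%N -> (l <= m)%N ->
  m%:R / n%:R * alpha%:R - beta%:R = v + m%:R * z%:~R ->
  0 < M -> M <= v -> M <= m%:R - v ->
  `|fourier (fun x : 'I_m => if (x < l)%N then chi R n alpha x else 0) beta| ^+ 2
    <= ((M ^+ 2)^-1 / 4)%:C.
Proof.
move=> m_gt0 lm e M_gt0 Mv Mmv.
have mR0 : (0 < m%:R :> R) by rewrite ltr0n.
have sin_ge : 2 * M <= m%:R * sin (pi * (v / m%:R)).
  have v_ge0 : 0 <= v := le_trans (ltW M_gt0) Mv.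
  have v_le : v <= m%:R by rewrite -subr_ge0 (le_trans (ltW M_gt0)).
  have : 2 * (M / m%:R) <= sin (pi * (v / m%:R)).
    apply: sin_pi_ge; rewrite ?ler_pM2r ?invr_gt0 //.
      by rewrite divr_ge0 //= ler_pdivrMr // mul1r.
    by rewrite ler_pdivrMr // mulrBl mul1r divfK ?lt0r_neq0.
  by rewrite -(ler_pM2l mR0) mulrCA [_ * (M / _)]mulrC divfK ?lt0r_neq0.
have M2_gt0 : 0 < ((2 * M) ^+ 2)%:C :> C by rewrite ltcR exprn_gt0 ?mulr_gt0.
rewrite -(ler_pM2r M2_gt0) -rmorphM /= (_ : _ / 4 * _ = 1) ?rmorph1; last first.
  by field; rewrite gt_eqF.
apply: le_trans (fourier_trunc_chi_sin_le m_gt0 lm e).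
rewrite ler_wpM2l ?exprn_ge0 ?normr_ge0 // lecR lerXn2r ?nnegrE //.
  by rewrite mulr_ge0 ?ltW.
exact: le_trans (mulr_ge0 _ (ltW M_gt0)) sin_ge.
Qed.

Lemma fourier_trunc_chi_tail (m n l alpha z0 : nat) (beta k : 'I_m) (t a : R) :
  (0 < m)%N -> (l <= m)%N -> 0 <= a -> 0 <= t < 1 ->
  m%:R / n%:R * alpha%:R = t + z0%:R -> (k + beta = z0 %[mod m])%N ->
  a < distk m (m%:R / n%:R * alpha%:R - beta%:R) ->
  `|fourier (fun x : 'I_m => if (x < l)%N then chi R n alpha x else 0) beta| ^+ 2
    <= ((invsq_gt a (t + k%:R) + invsq_gt a (m%:R - (t + k%:R))) / 4)%:C.
Proof.
move=> m_gt0 lm a_ge0 /andP[t_ge0 t_lt1] c_eq k_mod a_lt.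
set v := t + k%:R.
pose z : int := (z0 %/ m)%:Z - ((k + beta) %/ m)%:Z.
have c_decomp : m%:R / n%:R * alpha%:R - beta%:R = v + m%:R * z%:~R.
  have nat_eq : (z0 + (k + beta) %/ m * m = k + beta + z0 %/ m * m)%N.
    by have := divn_eq z0 m; have := divn_eq (k + beta) m; rewrite k_mod; lia.
  have := congr1 (fun x => x%:R : R) nat_eq; rewrite /= !natrD !natrM => real_eq.
  rewrite c_eq /v /z intrB /= !pmulrn; lra.
have v_ge0 : 0 <= v by rewrite addr_ge0.
have v_le : v <= m%:R.
  by have := ltn_ord k; rewrite -(ler_nat R) -natr1 /v; lra.
have a_lt_v : a < v.
  apply: lt_le_trans a_lt _; apply: le_trans (distk_le _ _ z) _.
  by rewrite c_decomp addrK ger0_norm.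
have a_lt_mv : a < m%:R - v.
  apply: lt_le_trans a_lt _; apply: le_trans (distk_le _ _ (z + 1)) _.
  by rewrite c_decomp intrD mulrDr mulr1 addrKA ler0_norm ?opprB // subr_le0.
rewrite /invsq_gt a_lt_v a_lt_mv.
set M := Num.min v (m%:R - v).
have M_gt_a : a < M by rewrite lt_min a_lt_v a_lt_mv.
have M_gt0 := le_lt_trans a_ge0 M_gt_a.
apply: le_trans (fourier_trunc_chi_le (M := M) m_gt0 lm c_decomp M_gt0 _ _) _.
- by rewrite ge_min lexx.
- by rewrite ge_min lexx orbT.
rewrite lecR ler_pM2r ?invr_gt0 // /M.
by case: (leP v (m%:R - v)) => _; rewrite ?lerDl ?lerDr invr_ge0 sqr_ge0.
Qed.

End TruncatedCharacter.

Theorem proposition4p1 (R : realType) (m n : nat) (eps : R)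
  (hm : (0 < m)%N) (heps : 0 < eps) (alpha : 'I_n) :
  let f : nat -> R[i] := fun x => chi R n alpha x in
  let l := minn n m in
  let g : 'I_m -> R[i] := fun x => if (x < l)%N then f x else 0 in
  let r : R := 1 / (2 * eps) in
  let Gamma' : pred 'I_m := fun beta =>
    distk m (m%:R / n%:R * (alpha : nat)%:R - (beta : nat)%:R) <= r + 1 in
  norm2sq (fun x => g x - restrG g Gamma' x) <= eps%:C.
Proof.
cbv zeta; rewrite norm2sq_sub_restrG //; set r := 1 / (2 * eps).
have r_gt0 : 0 < r by rewrite divr_gt0 ?mulr_gt0.
set c : R := m%:R / n%:R * alpha%:R.
have c_ge0 : 0 <= c by rewrite mulr_ge0 ?divr_ge0.
set z0 := Num.truncn c; set t := c - z0%:R.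
have t01 : 0 <= t < 1.
  by have /andP[] := truncn_itv c_ge0; rewrite /t -/z0 -natr1; lra.
(* k b is the residue of z0 - b, so that c - b = t + k b modulo m. *)
have [k [k_inj k_mod]] := ord_shift_perm z0 hm.
pose F (j : nat) := (invsq_gt (r + 1) (t + j%:R) + invsq_gt (r + 1) (m%:R - (t + j%:R))) / 4.
have F_ge0 j : 0 <= F j by rewrite divr_ge0 ?addr_ge0 ?invsq_gt_ge0.
apply: le_trans (ler_sum _ (fun b _ => fourier_trunc_chi_tail (k := k b) hm (geq_minr n m)
  (ltW (addr_gt0 r_gt0 ltr01)) t01 (esym (subrK _ c)) (k_mod b) _)) _.
  by move=> b; rewrite ltNge.
rewrite -rmorph_sum lecR; apply: le_trans (_ : _ <= \sum_b F (k b)) _.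
  by rewrite big_mkcond; apply: ler_sum => b _; case: ifP.
rewrite (_ : \sum_b F (k b) = \sum_(j < m) F j); last by rewrite [RHS](reindex_inj k_inj).
rewrite /F -big_distrl /=.
have t_le1 : 0 <= t <= 1 by case/andP: t01 => -> /ltW.
apply: le_trans (ler_wpM2r _ (sum_invsq_gt_sym_le m _ t_le1)) _; rewrite ?invr_ge0 //.
  by rewrite lerDr ltW.
have -> : 2 / (r + 1 - 1 / 2) / 4 = eps / (1 + eps).
  by rewrite /r; field; rewrite !gt_eqF //; lra.
by rewrite ler_pdivrMr ?mulrDr ?mulr1 ?lerDl ?mulr_ge0 ?ltW //; lra.
Qed.
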